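(* Let $a,b\in\mathbb{Z}$ with $\gcd(a,b)=1$. Then $\{G_n(a,b)\}$ is complete mod $3^j$ for every integer $j\ge 1$.
   Context: For integers $a,b$ with $\gcd(a,b)=1$, the Gibonacci sequence $\{G_n(a,b)\}_{n\ge1}$ is defined by $G_1=a$, $G_2=b$, $G_{n+1}=G_{n-1}+G_n$. A sequence is complete mod $m$ if every residue class modulo $m$ contains some term of the sequence. *)

From HB Require Import structures.
From mathcomp Require Import all_boot all_order all_algebra.
Set Implicit Arguments. Unset Strict Implicit. Unset Printing Implicit Defensive.
Import Order.TTheory GRing.Theory Num.Theory.
Local Open Scope ring_scope.

(* gib_aux a b k = (G_{k+1}, G_{k+2}) *)
Fixpoint gib_aux (a b : int) (k : nat) : int * int :=
  match k with
  | O => (a, b)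
  | S k' => let p := gib_aux a b k' in (p.2, p.1 + p.2)
  end.

(* Gibonacci sequence, 1-indexed: G a b 1 = a, G a b 2 = b,
   G a b (n+1) = G a b (n-1) + G a b n. (G a b 0 is a junk value, = a.) *)
Definition G (a b : int) (n : nat) : int := (gib_aux a b n.-1).1.

Definition complete_mod (s : nat -> int) (m : int) : Prop :=
  forall r : int, exists n : nat, (1 <= n)%N /\ (s n = r %[mod m])%Z.

Lemma G_1 a b : G a b 1 = a. Proof. by []. Qed.
Lemma G_2 a b : G a b 2 = b. Proof. by []. Qed.
Lemma G_rec a b n : (1 <= n)%N -> G a b n.+2 = G a b n + G a b n.+1.
Proof. by case: n. Qed.

From HB Require Import structures.
From mathcomp Require Import all_boot all_order all_algebra.
From mathcomp Require Import zify ring.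
Set Implicit Arguments. Unset Strict Implicit. Unset Printing Implicit Defensive.
Import Order.TTheory GRing.Theory Num.Theory.
Local Open Scope ring_scope.

(* All facts are proved for an arbitrary integer sequence [s] satisfying the
   Fibonacci recurrence.  The key congruence is
     s (n + 8*3^k) = s n + 3^(k+1) * s (n+2)   (mod 3^(k+2)),
   proved by induction on k: for k = 0 it is an identity of the recurrence,
   and the step divides the differences s (n + P) - s n by 3^(k+1), which
   yields new Fibonacci-type sequences to which the hypothesis applies again.
   Iterating, s (n + i*8*3^k) = s n + i * 3^(k+1) * s (n+2) (mod 3^(k+2)).

   Residues are then lifted (Hensel-style): if r is hit mod 3^(k+1) at an
   index n with s (n+2) prime to 3, moving n by a suitable multiple i < 3 of
   the period 8*3^k hits r mod 3^(k+2), still with s (n+2) prime to 3.  The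
   base case mod 3 is a finite check on the eight nonzero pairs of residues,
   and coprimality of a and b guarantees the starting pair is nonzero. *)

Definition fib_rec (s : nat -> int) : Prop := forall n, s n.+2 = s n + s n.+1.

(* 8 * 3^k : a period of every Fibonacci-type sequence modulo 3^(k+1). *)
Definition period (k : nat) : nat := (8 * 3 ^ k)%N.

Lemma periodS k : period k.+1 = (period k + period k + period k)%N.
Proof. by rewrite /period expnS; lia. Qed.

Lemma fib_rec_diff_quotient (s : nat -> int) (p : nat) (q : int) :
  fib_rec s -> q != 0 -> (forall n, (q %| s (n + p)%N - s n)%Z) ->
  fib_rec (fun n => ((s (n + p)%N - s n) %/ q)%Z).
Proof.
move=> Hs q0 Hd n /=; apply: (mulIf q0).
rewrite mulrDl !divzK // -[(n.+2 + p)%N]/((n + p).+2)%N.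
rewrite -[(n.+1 + p)%N]/((n + p).+1)%N !Hs; ring.
Qed.

Definition period_congr (k : nat) : Prop := forall s, fib_rec s -> forall n,
  (3 ^+ k.+2 %| s (n + period k)%N - s n - 3 ^+ k.+1 * s n.+2)%Z.

Lemma period_congr0 : period_congr 0.
Proof.
move=> s Hs n; apply/dvdzP; exists (s n + 2 * s n.+1).
have -> : (n + period 0 = n.+4.+4)%N by rewrite /period; lia.
rewrite !Hs; ring.
Qed.

Lemma period_congr_dvd k : period_congr k ->
  forall s, fib_rec s -> forall n, (3 ^+ k.+1 %| s (n + period k)%N - s n)%Z.
Proof.
move=> Hk s Hs n; have /dvdzP [e He] := Hk s Hs n.
apply/dvdzP; exists (s n.+2 + 3 * e); move: He; rewrite [3 ^+ k.+2]exprS; lia.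
Qed.

(* With q = 3^(k+1) = 3r, P = 8*3^k, u = (s(.+P) - s)/q
   and w = (u(.+P) - u)/q (both Fibonacci-type), one gets
     s (n+3P) - s n = q (u n + u (n+P) + u (n+2P))
                    = q (3 u n + 3 q w n + q (w (n+P) - w n)),
   and u n = s (n+2) (mod 3) by the hypothesis, q | w (n+P) - w n. *)
Lemma period_congrS k : period_congr k -> period_congr k.+1.
Proof.
move=> Hk s Hs n; set r : int := 3 ^+ k; set P := period k.
have q_eq : 3 ^+ k.+1 = 3 * r by rewrite exprS.
have q0 : 3 * r != 0 by rewrite -q_eq expf_neq0.
pose u m := ((s (m + P)%N - s m) %/ (3 * r))%Z.
have Ds := period_congr_dvd Hk Hs; rewrite q_eq in Ds.
have Hu : fib_rec u := fib_rec_diff_quotient Hs q0 Ds.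
have Eu m : s (m + P)%N - s m = u m * (3 * r) by rewrite divzK.
pose w m := ((u (m + P)%N - u m) %/ (3 * r))%Z.
have Du := period_congr_dvd Hk Hu; rewrite q_eq in Du.
have Ew m : u (m + P)%N - u m = w m * (3 * r) by rewrite divzK.
have Hw : fib_rec w := fib_rec_diff_quotient Hu q0 Du.
have /dvdzP [d Hd] := period_congr_dvd Hk Hw n; rewrite q_eq -/P in Hd.
have /dvdzP [e He] := Hk s Hs n; rewrite !exprS -/r -/P in He.
have un_eq : u n = s n.+2 + 3 * e.
  by apply: (mulIf q0); rewrite -Eu; lia.
have s3P : s (n + P + P + P)%N =
    s n + 3 * r * (u n + u (n + P)%N + u (n + P + P)%N).
  by have := Eu (n + P)%N; have := Eu (n + P + P)%N; have := Eu n; lia.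
have u2P : u (n + P + P)%N = u n + 3 * r * (w n + w (n + P)%N).
  by have := Ew n; have := Ew (n + P)%N; lia.
have uP : u (n + P)%N = u n + 3 * r * w n by have := Ew n; lia.
have wP : w (n + P)%N = w n + d * (3 * r) by lia.
apply/dvdzP; exists (e + r * w n + r * r * d).
have -> : (n + period k.+1 = n + P + P + P)%N by rewrite periodS /P; lia.
rewrite s3P u2P uP wP un_eq !exprS -/r; ring.
Qed.

Lemma period_congr_all k : period_congr k.
Proof. by elim: k => [|k IH]; [exact: period_congr0 | exact: period_congrS]. Qed.

Section FibTypeSequence.

Variable s : nat -> int.
Hypothesis Hs : fib_rec s.

Lemma period_mult_dvd k m i : (3 ^+ k.+1 %| s (m + i * period k)%N - s m)%Z.
Proof.
elim: i => [|i IH]; first by rewrite mul0n addn0 subrr dvdz0.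
have step := period_congr_dvd (period_congr_all k) Hs (m + i * period k)%N.
have -> : (m + i.+1 * period k = m + i * period k + period k)%N.
  by rewrite mulSn; lia.
have -> : s (m + i * period k + period k)%N - s m =
  (s (m + i * period k + period k)%N - s (m + i * period k)%N) +
  (s (m + i * period k)%N - s m) by ring.
exact: rpredD.
Qed.

Lemma period_mult_congr k n i :
  (3 ^+ k.+2 %| s (n + i * period k)%N - s n - i%:Z * 3 ^+ k.+1 * s n.+2)%Z.
Proof.
elim: i => [|i IH]; first by rewrite mul0n addn0 mul0r mul0r !subr0 subrr dvdz0.
set m := (n + i * period k)%N.
have step := period_congr_all k Hs m.
have shift := period_mult_dvd k n.+2 i.
rewrite -[(n.+2 + _)%N]/m.+2 in shift.
have -> : (n + i.+1 * period k)%N = (m + period k)%N by rewrite mulSn /m; lia.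
have -> : s (m + period k)%N - s n - i.+1%:Z * 3 ^+ k.+1 * s n.+2 =
  (s (m + period k)%N - s m - 3 ^+ k.+1 * s m.+2) +
  (s m - s n - i%:Z * 3 ^+ k.+1 * s n.+2) +
  3 ^+ k.+1 * (s m.+2 - s n.+2).
  by rewrite intS; ring.
apply: rpredD; first exact: rpredD.
rewrite [3 ^+ k.+2]exprS; apply: dvdz_mul shift.
by rewrite exprS dvdz_mulr.
Qed.

(* r is hit modulo m at an index n whose term s (n+2) is prime to 3;
   the latter condition is what allows lifting to the next power of 3. *)
Definition good_hit (m r : int) : Prop :=
  exists n, (m %| s n - r)%Z /\ ~~ (3 %| s n.+2)%Z.

(* Hensel-style lifting from 3^(k+1) to 3^(k+2): if s n = r + c 3^(k+1),
   then s (n + i*8*3^k) = r + (c + i s (n+2)) 3^(k+1) (mod 3^(k+2)), and one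
   of i = 0, 1, 2 makes c + i s (n+2) divisible by 3 since s (n+2) is a unit
   mod 3.  The term two steps later is unchanged mod 3. *)
Lemma good_hit_lift k r : good_hit (3 ^+ k.+1) r -> good_hit (3 ^+ k.+2) r.
Proof.
case=> n [/dvdzP [c Hc] coprime_n].
have three_dvd_pow : (3 %| 3 ^+ k.+1)%Z by rewrite exprS dvdz_mulr.
have lift (i : nat) : (3 %| c + i%:Z * s n.+2)%Z -> good_hit (3 ^+ k.+2) r.
  move=> three_dvd; exists (n + i * period k)%N; split.
    have -> : s (n + i * period k)%N - r =
        (s (n + i * period k)%N - s n - i%:Z * 3 ^+ k.+1 * s n.+2) +
        3 ^+ k.+1 * (c + i%:Z * s n.+2) by rewrite mulrDr [3 ^+ k.+1 * c]mulrC -Hc; ring.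
    apply: rpredD; first exact: period_mult_congr.
    by rewrite [3 ^+ k.+2]exprSr; apply: dvdz_mul.
  have shift := dvdz_trans three_dvd_pow (period_mult_dvd k n.+2 i).
  rewrite -[(n.+2 + _)%N]/((n + i * period k).+2)%N in shift.
  by move: coprime_n shift; lia.
have : (3 %| c)%Z \/ (3 %| c + s n.+2)%Z \/ (3 %| c + 2 * s n.+2)%Z by lia.
by case=> [H|[H|H]]; [apply: (lift 0%N) | apply: (lift 1%N) | apply: (lift 2%N)]; lia.
Qed.

(* Proves a right-nested disjunction by finding a disjunct that lia solves;
   used for finite case checks where one lia on the whole goal is too big. *)
Ltac first_true_disjunct := first [ left; lia | right; first_true_disjunct | lia ].

Lemma good_hit_base r : ~~ ((3 %| s 0%N)%Z && (3 %| s 1%N)%Z) -> good_hit 3 r.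
Proof.
move=> start.
suff : (3 %| s 0%N - r)%Z /\ ~~ (3 %| s 2%N)%Z \/
       (3 %| s 1%N - r)%Z /\ ~~ (3 %| s 3%N)%Z \/
       (3 %| s 2%N - r)%Z /\ ~~ (3 %| s 4%N)%Z \/
       (3 %| s 3%N - r)%Z /\ ~~ (3 %| s 5%N)%Z \/
       (3 %| s 4%N - r)%Z /\ ~~ (3 %| s 6%N)%Z \/
       (3 %| s 5%N - r)%Z /\ ~~ (3 %| s 7%N)%Z \/
       (3 %| s 6%N - r)%Z /\ ~~ (3 %| s 8%N)%Z \/
       (3 %| s 7%N - r)%Z /\ ~~ (3 %| s 9%N)%Z.
  by do 7 (case; first by move=> h; eexists; exact: h); move=> h; eexists; exact: h.
rewrite !Hs.
have [hr|[hr|hr]] : (3 %| r)%Z \/ (3 %| r - 1)%Z \/ (3 %| r - 2)%Z by lia.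
all: have [hx|[hx|hx]] :
  (3 %| s 0%N)%Z \/ (3 %| s 0%N - 1)%Z \/ (3 %| s 0%N - 2)%Z by lia.
all: have [hy|[hy|hy]] :
  (3 %| s 1%N)%Z \/ (3 %| s 1%N - 1)%Z \/ (3 %| s 1%N - 2)%Z by lia.
all: first [ by rewrite hx hy in start | first_true_disjunct ].
Qed.

End FibTypeSequence.

Theorem mainTheorem9 (a b : int) (hab : gcdz a b = 1%N) (j : nat) (hj : (1 <= j)%N) :
  complete_mod (G a b) (3 ^ j)%N.
Proof.
pose s n := G a b n.+1.
have Hs : fib_rec s by move=> n; rewrite /s G_rec.
have start : ~~ ((3 %| s 0%N)%Z && (3 %| s 1%N)%Z) by rewrite -dvdz_gcd hab.
have hit k r : good_hit s (3 ^+ k.+1) r.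
  by elim: k => [|k IH]; [exact: good_hit_base | exact: good_hit_lift].
case: j hj => // k _ r.
have [n [Hn _]] := hit k r.
exists n.+1; split => //.
by apply/eqP; rewrite eqz_mod_dvd -natz natrX.
Qed.
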